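(* Let $n\ge 2$, let $\Delta_n^\circ=\{\mathbf{s}\in\mathbb{R}^n: s_i>0 \text{ for all } i,\ \sum_i s_i=1\}$, let $\partial\Delta_n=\{\mathbf{s}\in\mathbb{R}^n: s_i\ge 0\ \forall i,\ \sum_i s_i=1,\ s_i=0\text{ for some } i\}$, and for $\mathbf{s}\in\mathbb{R}^n$ let $M(\mathbf{s})=\operatorname{Diag}(\mathbf{s})-\mathbf{s}\mathbf{s}^\top$. Let $\sigma_1:\mathbb{R}^n\to\Delta_n^\circ$ be the softmax map $\sigma_1(\mathbf{x})_i=e^{x_i}/\sum_{j}e^{x_j}$, whose Jacobian at $\mathbf{x}$ is $J_{\sigma_1}(\mathbf{x})=M(\sigma_1(\mathbf{x}))$, so that $\sup_{\mathbf{x}\in\mathbb{R}^n}\|J_{\sigma_1}(\mathbf{x})\|_p=\sup_{\mathbf{s}\in\Delta_n^\circ}\|M(\mathbf{s})\|_p$. (a) For $p=1$ or $p=\infty$, this supremum equals $1/2$ and is attained at a point of $\Delta_n^\circ$; in particular, for $\mathbf{x}=(\ln(n-1),0,\dots,0)\in\mathbb{R}^n$, the point $\mathbf{s}=\sigma_1(\mathbf{x})$ lies in $\Delta_n^\circ$ and $\|M(\mathbf{s})\|_p=1/2$. (b) For $p\in(1,\infty)$, the supremum again equals $1/2$. If $n>2$, it is not attained in $\Delta_n^\circ$ (i.e. $\|M(\mathbf{s})\|_p<1/2$ for every $\mathbf{s}\in\Delta_n^\circ$), and there exists a sequence $(\mathbf{s}_k)_{k\ge1}\subset\Delta_n^\circ$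 converging to a point of $\partial\Delta_n$, with $\mathbf{s}_k=\sigma_1(\mathbf{x}_k)$ for some $\mathbf{x}_k\in\mathbb{R}^n$, such that $\lim_{k\to\infty}\|M(\mathbf{s}_k)\|_p=1/2$. If $n=2$, the supremum $1/2$ is attained at a point of $\Delta_2^\circ$.
   Context: For $p\in[1,\infty)$, $\|\mathbf{x}\|_p=(\sum_i|x_i|^p)^{1/p}$ and $\|\mathbf{x}\|_\infty=\max_i|x_i|$; for a square matrix $A$, $\|A\|_p=\sup_{\mathbf{v}\ne0}\|A\mathbf{v}\|_p/\|\mathbf{v}\|_p$ is the induced operator norm. $\operatorname{Diag}(\mathbf{s})$ is the diagonal matrix with diagonal $\mathbf{s}$. *)

From HB Require Import structures.
From mathcomp Require Import all_boot all_order all_algebra.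
From mathcomp Require Import all_classical all_reals all_analysis.
Set Implicit Arguments. Unset Strict Implicit. Unset Printing Implicit Defensive.
Import Order.TTheory GRing.Theory Num.Theory.
Import numFieldNormedType.Exports.
Local Open Scope classical_set_scope.
Local Open Scope ring_scope.

(* Vector p-norm, p in [1, +oo] given as an extended real:
   finite p : (sum_i |x_i|^p)^(1/p);  p = +oo : max_i |x_i|.
   (The value at -oo is irrelevant and set to 0.) *)
Definition pnorm {R : realType} {n : nat} (p : \bar R) (v : 'cV[R]_n) : R :=
  match p with
  | EFin q => (\sum_i `|v i 0| `^ q) `^ (q^-1)
  | +oo%E => \big[Num.max/0]_i `|v i 0|
  | -oo%E => 0
  end.

Definition opnorm {R : realType} {n : nat} (p : \bar R) (A : 'M[R]_n) : R :=
  sup [set pnorm p (A *m v) / pnorm p v | v in [set v : 'cV[R]_n | v != 0]].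

Definition Mmat {R : realType} {n : nat} (s : 'cV[R]_n) : 'M[R]_n :=
  diag_mx (s^T) - s *m s^T.

Definition softmax {R : realType} {n : nat} (x : 'cV[R]_n) : 'cV[R]_n :=
  \col_i (expR (x i 0) / \sum_j expR (x j 0)).

Definition simplex_int {R : realType} {n : nat} (s : 'cV[R]_n) : Prop :=
  (forall i, 0 < s i 0) /\ \sum_i s i 0 = 1.

Definition simplex_bd {R : realType} {n : nat} (s : 'cV[R]_n) : Prop :=
  (forall i, 0 <= s i 0) /\ \sum_i s i 0 = 1 /\ exists i, s i 0 = 0.

Definition sup_simplex {R : realType} (n : nat) (p : \bar R) : R :=
  sup [set opnorm p (@Mmat R n s) | s in [set s | simplex_int s]].

Definition sup_jac {R : realType} (n : nat) (p : \bar R) : R :=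
  sup [set opnorm p (Mmat (softmax x)) | x in [set: 'cV[R]_n]].

Definition x_star {R : realType} (n : nat) : 'cV[R]_n :=
  \col_i (if val i == 0%N then ln (n.-1)%:R else 0).

(* For s in the open simplex, the l^1 norm of row i (and of column i) of
   M(s) = Diag(s) - s s^T is r_i = 2 s_i (1 - s_i) <= 1/2.  This bounds the
   oo-norm directly; for finite p, Jensen's inequality on each row gives Schur's
   test ||M(s) v||_p^p <= sum_j (sum_i r_i^(p-1) |M_ij|) |v_j|^p
   <= (1/2)^p ||v||_p^p.  If n > 2 and p > 1, some coordinate of s differs
   from 1/2, which makes every column weight strictly smaller than (1/2)^p,
   so ||M(s)||_p < 1/2.  Conversely, if s_i = s_k = a then e_i - e_k is an
   eigenvector of M(s) for the eigenvalue a, so the points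
   (a, a, (1-2a)/(n-2), ...) with a -> 1/2 push ||M(s)||_p to 1/2.  For
   p in {1, oo} one coordinate s_i = 1/2 suffices, as for the softmax of
   (ln(n-1), 0, ..., 0): column i, resp. the sign vector 2 e_i - 1, attains 1/2. *)

From HB Require Import structures.
From mathcomp Require Import all_boot all_order all_algebra.
From mathcomp Require Import all_classical all_reals all_analysis.
From mathcomp Require Import ring lra.
Import Order.TTheory GRing.Theory Num.Theory.
Import numFieldNormedType.Exports.
Set Implicit Arguments.
Unset Strict Implicit.
Unset Printing Implicit Defensive.

Local Open Scope classical_set_scope.
Local Open Scope ring_scope.

Section RealInequalities.
Variable R : realType.
Implicit Types p r x y : R.

Lemma ler_powR2r r x y : 0 <= r -> 0 <= x -> x <= y -> x `^ r <= y `^ r.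
Proof. by move=> r0 x0 xy; apply: ge0_ler_powR; rewrite ?nnegrE // (le_trans x0 xy). Qed.

Lemma ltr_powR2r r x y : 0 < r -> 0 <= x -> x < y -> x `^ r < y `^ r.
Proof. by move=> r0 x0 xy; apply: gt0_ltr_powR; rewrite ?nnegrE // (le_trans x0 (ltW xy)). Qed.

Lemma powRK r x : 0 < r -> 0 <= x -> (x `^ r) `^ r^-1 = x.
Proof. by move=> r0 x0; rewrite -powRrM mulfV ?gt_eqF // powRr1. Qed.

Lemma mul2_onem_le_half x : 2 * x * (1 - x) <= 1 / 2.
Proof. have := sqr_ge0 (2 * x - 1); nra. Qed.

Lemma mul2_onem_lt_half x : x != 1 / 2 -> 2 * x * (1 - x) < 1 / 2.
Proof.
move=> x12; have : 0 < (2 * x - 1) ^+ 2.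
  by rewrite exprn_even_gt0 //; apply: contra x12; rewrite subr_eq0 => /eqP ?; apply/eqP; lra.
nra.
Qed.

(* Young's inequality for [x] and [y^(p-1)] with the exponents [p] and [p / (p - 1)]. *)
Lemma powR_tangent_le p x y : 1 <= p -> 0 <= x -> 0 < y ->
  y `^ p + p * y `^ (p - 1) * (x - y) <= x `^ p.
Proof.
move=> p1 x0 y0; have [->|pn1] := eqVneq p 1.
  by rewrite subrr powRr0 !powRr1 ?(ltW y0) //; lra.
have p0 : 0 < p by lra.
have pm0 : 0 < p - 1 by rewrite subr_gt0 lt_neqAle eq_sym pn1.
pose q := p / (p - 1).
have q0 : 0 < q by rewrite divr_gt0.
have pq : p^-1 + q^-1 = 1 by rewrite invf_div; field; rewrite gt_eqF.
have yq : (y `^ (p - 1)) `^ q = y `^ p by rewrite -powRrM /q mulrC mulfVK ?gt_eqF.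
have := conjugate_powR x0 (powR_ge0 y (p - 1)) p0 q0 pq; rewrite yq => young.
have yp : y * y `^ (p - 1) = y `^ p by rewrite mulr_powRB1 // ltW.
have {young} : p * (x * y `^ (p - 1)) <= x `^ p + (p - 1) * y `^ p.
  have -> : x `^ p + (p - 1) * y `^ p = p * (x `^ p / p + y `^ p / q).
    by rewrite /q; field; rewrite !gt_eqF.
  by rewrite ler_pM2l.
rewrite -yp; lra.
Qed.

Lemma jensen_powR n p (a x : 'I_n -> R) : 1 <= p ->
  (forall j, 0 <= a j) -> (forall j, 0 <= x j) ->
  (\sum_j a j * x j) `^ p <= (\sum_j a j) `^ (p - 1) * \sum_j a j * x j `^ p.
Proof.
move=> p1 a0 x0; have p0 : 0 < p by lra.
set r := \sum_j a j; set t := \sum_j a j * x j.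
have t0 : 0 <= t by apply: sumr_ge0 => j _; rewrite mulr_ge0.
have [->|tn0] := eqVneq t 0.
  by rewrite powR0 ?gt_eqF // mulr_ge0 ?powR_ge0 // sumr_ge0 // => j _; rewrite mulr_ge0 ?powR_ge0.
have r0 : 0 < r.
  rewrite lt_neqAle sumr_ge0 // andbT eq_sym; apply: contra tn0.
  rewrite psumr_eq0 // => /allP ar0; apply/eqP/big1 => j _.
  by rewrite (eqP (ar0 j (mem_index_enum j))) mul0r.
have tm : t = r * (t / r) by rewrite mulrC divfK ?gt_eqF.
set m := t / r in tm *.
have m0 : 0 < m by rewrite divr_gt0 // lt_neqAle eq_sym tn0.
have tangent : r * m `^ p <= \sum_j a j * x j `^ p.
  have -> : r * m `^ p = \sum_j a j * (m `^ p + p * m `^ (p - 1) * (x j - m)).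
    have -> : \sum_j a j * (m `^ p + p * m `^ (p - 1) * (x j - m)) =
       (m `^ p - p * m `^ (p - 1) * m) * r + p * m `^ (p - 1) * t.
      rewrite /r /t !mulr_sumr -big_split /=.
      by apply: eq_bigr => j _; ring.
    by rewrite [t in RHS]tm; ring.
  by apply: ler_sum => j _; apply: ler_wpM2l; rewrite ?powR_tangent_le.
rewrite tm powRM ?(ltW r0) ?(ltW m0) // -mulr_powRB1 ?(ltW r0) // -mulrA mulrCA.
by apply: ler_wpM2l; rewrite ?powR_ge0.
Qed.

End RealInequalities.

Section OperatorNorms.
Variables (R : realType) (n : nat).
Implicit Types (A : 'M[R]_n) (v : 'cV[R]_n).

Lemma pnorm1E v : pnorm 1%E v = \sum_i `|v i 0|.
Proof.
rewrite /= invr1 powRr1; last by apply: sumr_ge0 => i _; exact: powR_ge0.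
by apply: eq_bigr => i _; rewrite powRr1.
Qed.

Lemma pnormZ (p a : R) v : 0 < p -> 0 <= a ->
  pnorm p%:E (a *: v) = a * pnorm p%:E v.
Proof.
move=> p0 a0; rewrite /=.
under eq_bigr => i _ do rewrite mxE normrM (ger0_norm a0) powRM ?normr_ge0 //.
rewrite -mulr_sumr powRM ?powR_ge0 ?powRK //.
by apply: sumr_ge0 => i _; exact: powR_ge0.
Qed.

Lemma pnorm_gt0 (p : \bar R) v : (0 < p)%E -> v != 0 -> 0 < pnorm p v.
Proof.
move=> p0 v0; have [i vi0] : exists i, v i 0 != 0.
  apply: contrapT => nex; move/eqP: v0; apply; apply/matrixP => i j.
  by rewrite (ord1 j) mxE; apply/eqP; apply/negPn/negP => vi0; apply: nex; exists i.
case: p p0 => [q||] //= q0.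
  apply: powR_gt0; rewrite (bigD1 i) //= ltr_pwDl ?powR_gt0 ?normr_gt0 //.
  by apply: sumr_ge0 => j _; exact: powR_ge0.
by apply: lt_le_trans (le_bigmax _ _ i); rewrite normr_gt0.
Qed.

Lemma opnorm_le (p : \bar R) A (K : R) : (0 < n)%N -> (0 < p)%E ->
  (forall v, pnorm p (A *m v) <= K * pnorm p v) -> opnorm p A <= K.
Proof.
move=> n0 p0 AK; apply: ge_sup.
  pose e0 : 'cV[R]_n := delta_mx (Ordinal n0) 0.
  have e0_neq0 : e0 != 0.
    by apply/eqP => /matrixP/(_ (Ordinal n0) 0); rewrite !mxE !eqxx; apply/eqP/oner_neq0.
  by exists (pnorm p (A *m e0) / pnorm p e0), e0.
by move=> _ [v v0 <-]; rewrite ler_pdivrMr ?pnorm_gt0.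
Qed.

Lemma ler_opnorm (p : \bar R) A (K : R) v : (0 < p)%E ->
  (forall w, pnorm p (A *m w) <= K * pnorm p w) -> v != 0 ->
  pnorm p (A *m v) / pnorm p v <= opnorm p A.
Proof.
move=> p0 AK v0; apply: ub_le_sup; last by exists v.
by exists K => _ [w w0 <-]; rewrite ler_pdivrMr ?pnorm_gt0.
Qed.

Lemma eigenvalue_le_opnorm (p a K : R) A v : 0 < p -> 0 <= a ->
  (forall w, pnorm p%:E (A *m w) <= K * pnorm p%:E w) ->
  v != 0 -> A *m v = a *: v -> a <= opnorm p%:E A.
Proof.
move=> p0 a0 AK v0 Av; have := @ler_opnorm p%:E A K v; rewrite lte_fin => /(_ p0 AK v0).
by rewrite Av pnormZ // mulfK // gt_eqF // pnorm_gt0 ?lte_fin.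
Qed.

Lemma sum_norm_col_le_opnorm1 A (K : R) k :
  (forall w, pnorm 1%E (A *m w) <= K * pnorm 1%E w) ->
  \sum_i `|A i k| <= opnorm 1%E A.
Proof.
move=> AK; have ek0 : delta_mx k 0 != 0 :> 'cV[R]_n.
  by apply/eqP => /matrixP/(_ k 0); rewrite !mxE !eqxx; apply/eqP/oner_neq0.
have ek1 : pnorm 1%E (delta_mx k 0 : 'cV[R]_n) = 1.
  rewrite pnorm1E (bigD1 k) //= big1 => [|i ik]; last by rewrite mxE (negbTE ik) normr0.
  by rewrite mxE !eqxx normr1 addr0.
have := ler_opnorm lte01 AK ek0; rewrite ek1 divr1 pnorm1E.
by under eq_bigr => i _ do rewrite -colE mxE.
Qed.

Definition row_abs_sum A i := \sum_j `|A i j|.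

(* Column weights of Schur's test with the row sums as test weights. *)
Definition schur_weight (p : R) A j := \sum_i row_abs_sum A i `^ (p - 1) * `|A i j|.

Lemma row_abs_sum_ge0 A i : 0 <= row_abs_sum A i.
Proof. exact: sumr_ge0. Qed.

Lemma schur_weight_le (p K : R) A j : 1 <= p ->
  (forall i, row_abs_sum A i <= K) ->
  schur_weight p A j <= K `^ (p - 1) * \sum_i `|A i j|.
Proof.
move=> p1 AK; rewrite mulr_sumr; apply: ler_sum => i _.
by rewrite ler_wpM2r // ler_powR2r ?subr_ge0 ?row_abs_sum_ge0.
Qed.

Lemma norm_mulmx_le A v i : `|(A *m v) i 0| <= \sum_j `|A i j| * `|v j 0|.
Proof.
rewrite mxE; apply: le_trans (ler_norm_sum _ _ _) _.
by apply: ler_sum => j _; rewrite normrM.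
Qed.

Lemma pnorm_mulmx_le (p C : R) A v : 1 <= p -> 0 <= C ->
  (forall j, schur_weight p A j <= C) ->
  pnorm p%:E (A *m v) <= C `^ p^-1 * pnorm p%:E v.
Proof.
move=> p1 C0 AC; have p0 : 0 < p by lra.
have vp0 : 0 <= \sum_j `|v j 0| `^ p by apply: sumr_ge0 => j _; exact: powR_ge0.
rewrite /= -powRM //; apply: ler_powR2r; first by rewrite invr_ge0 ltW.
  by apply: sumr_ge0 => i _; exact: powR_ge0.
have rowwise i : `|(A *m v) i 0| `^ p <=
    row_abs_sum A i `^ (p - 1) * \sum_j `|A i j| * `|v j 0| `^ p.
  apply: le_trans (jensen_powR _ _ _) => //.
  by rewrite ler_powR2r ?norm_mulmx_le // ltW.
apply: le_trans (ler_sum _ (fun i _ => rowwise i)) _.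
rewrite (eq_bigr (fun i => \sum_j row_abs_sum A i `^ (p - 1) * `|A i j| * `|v j 0| `^ p));
  last by move=> i _; rewrite mulr_sumr; apply: eq_bigr => j _; rewrite mulrA.
rewrite exchange_big /= mulr_sumr; apply: ler_sum => j _.
by rewrite -mulr_suml; apply: ler_wpM2r; [exact: powR_ge0 | exact: AC].
Qed.

Lemma pnormy_mulmx_le A (K : R) v : 0 <= K ->
  (forall i, row_abs_sum A i <= K) -> pnorm +oo%E (A *m v) <= K * pnorm +oo%E v.
Proof.
rewrite /=; set m := \big[Num.max/0]_i `|v i 0| => K0 AK.
have m0 : 0 <= m by apply: bigmax_ge_id.
apply: bigmax_le => [|i _]; first by rewrite mulr_ge0.
apply: le_trans (norm_mulmx_le _ _ _) _.
apply: (@le_trans _ _ (row_abs_sum A i * m)); last by rewrite ler_wpM2r.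
by rewrite /row_abs_sum mulr_suml; apply: ler_sum => j _; rewrite ler_wpM2l ?le_bigmax.
Qed.

End OperatorNorms.

Section MmatNorms.
Variables (R : realType) (n : nat).
Implicit Types (s v : 'cV[R]_n) (i j k : 'I_n).

Lemma MmatE s i j : Mmat s i j = s i 0 *+ (i == j) - s i 0 * s j 0.
Proof. by rewrite /Mmat !mxE big_ord1 !mxE. Qed.

Lemma normr_MmatC s i j : `|Mmat s i j| = `|Mmat s j i|.
Proof. by rewrite !MmatE eq_sym; have [->|] := eqVneq i j; rewrite // mulrC. Qed.

Lemma row_abs_sum_Mmat s i : simplex_int s ->
  row_abs_sum (Mmat s) i = 2 * s i 0 * (1 - s i 0).
Proof.
case=> s_gt0 s1; have others : \sum_(j | j != i) s j 0 = 1 - s i 0.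
  by rewrite -s1 [X in _ = X - _](bigD1 i) //= addrC addrK.
have si_le1 : s i 0 <= 1.
  by rewrite -subr_ge0 -others sumr_ge0 // => j _; rewrite ltW.
rewrite /row_abs_sum (bigD1 i) //= MmatE eqxx mulr1n.
have -> : \sum_(j | j != i) `|Mmat s i j| = s i 0 * (1 - s i 0).
  rewrite -others mulr_sumr; apply: eq_bigr => j ji.
  by rewrite MmatE eq_sym (negbTE ji) sub0r normrN ger0_norm // mulr_ge0 ?ltW.
rewrite ger0_norm; first ring.
by rewrite -{1}[s i 0]mulr1 -mulrBr mulr_ge0 ?subr_ge0 // ltW.
Qed.

Lemma col_abs_sum_Mmat s j : simplex_int s ->
  \sum_i `|Mmat s i j| = 2 * s j 0 * (1 - s j 0).
Proof.
move=> s_int; rewrite -row_abs_sum_Mmat //.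
by apply: eq_bigr => i _; rewrite normr_MmatC.
Qed.

Lemma row_abs_sum_Mmat_le_half s : simplex_int s ->
  forall i, row_abs_sum (Mmat s) i <= 1 / 2.
Proof. by move=> s_int i; rewrite row_abs_sum_Mmat ?mul2_onem_le_half. Qed.

Lemma simplex_int_exists_neq_half s : (2 < n)%N -> simplex_int s ->
  exists k, s k 0 != 1 / 2.
Proof.
move=> n3 [_ s1]; apply: contrapT => /forallNP all_half.
have : \sum_i s i 0 = n%:R / 2.
  rewrite (eq_bigr (fun=> 1 / 2)) => [|i _]; last by apply/eqP/negPn/negP; exact: all_half.
  by rewrite sumr_const card_ord -mulr_natr; field.
have : (3 : R) <= n%:R by rewrite ler_nat.
lra.
Qed.

Let half_powR (p : R) : 0 < p -> (1 / 2 : R) `^ p = (1 / 2) `^ (p - 1) * (1 / 2).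
Proof. by move=> p0; rewrite [RHS]mulrC mulr_powRB1. Qed.

Lemma schur_weight_Mmat_le (p : R) s j : simplex_int s -> 1 <= p ->
  schur_weight p (Mmat s) j <= (1 / 2) `^ p.
Proof.
move=> s_int p1; rewrite half_powR; last by lra.
apply: le_trans (schur_weight_le _ p1 (row_abs_sum_Mmat_le_half s_int)) _.
by rewrite col_abs_sum_Mmat // ler_wpM2l ?powR_ge0 ?mul2_onem_le_half.
Qed.

Lemma schur_weight_Mmat_lt (p : R) s j : (2 < n)%N -> simplex_int s -> 1 < p ->
  schur_weight p (Mmat s) j < (1 / 2) `^ p.
Proof.
move=> n3 s_int p1; have p0 : 0 < p by lra.
have half_pow_gt0 : 0 < (1/2 : R) `^ (p - 1) by apply: powR_gt0; lra.
rewrite half_powR //; have [sj|sj] := eqVneq (s j 0) (1 / 2); last first.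
  apply: le_lt_trans (schur_weight_le _ (ltW p1) (row_abs_sum_Mmat_le_half s_int)) _.
  by rewrite col_abs_sum_Mmat // ltr_pM2l // mul2_onem_lt_half.
have [k sk] := simplex_int_exists_neq_half n3 s_int.
have kj : k != j by apply: contra sk => /eqP ->; rewrite sj.
have Mkj : 0 < `|Mmat s k j|.
  by rewrite MmatE (negbTE kj) sub0r normrN normr_gt0 mulf_neq0 // gt_eqF //; case: s_int.
have col_half : \sum_i `|Mmat s i j| = 1 / 2.
  by rewrite col_abs_sum_Mmat // sj; field.
rewrite -{2}col_half mulr_sumr /schur_weight (bigD1 k) //= [ltRHS](bigD1 k) //=.
apply: ltr_leD.
  rewrite ltr_pM2r // ltr_powR2r ?subr_gt0 ?row_abs_sum_ge0 //.
  by rewrite row_abs_sum_Mmat // mul2_onem_lt_half.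
apply: ler_sum => i _; rewrite ler_wpM2r // ler_powR2r ?subr_ge0 ?row_abs_sum_ge0 ?(ltW p1) //.
exact: row_abs_sum_Mmat_le_half.
Qed.

Lemma pnorm_Mmat_le_half (p : \bar R) s v : simplex_int s -> (1 <= p)%E ->
  pnorm p (Mmat s *m v) <= 1 / 2 * pnorm p v.
Proof.
move=> s_int; case: p => [p||] //; rewrite ?lee_fin => p1; last first.
  by apply: pnormy_mulmx_le; [lra | exact: row_abs_sum_Mmat_le_half].
rewrite -[1 / 2](@powRK _ p) //; last by lra.
apply: (pnorm_mulmx_le _ p1 (powR_ge0 _ _)) => j.
exact: schur_weight_Mmat_le.
Qed.

Lemma opnorm_Mmat_le_half (p : \bar R) s : (0 < n)%N -> (1 <= p)%E ->
  simplex_int s -> opnorm p (Mmat s) <= 1 / 2.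
Proof.
move=> n0 p1 s_int; apply: opnorm_le => //; first exact: lt_le_trans lte01 p1.
by move=> v; exact: pnorm_Mmat_le_half.
Qed.

Lemma opnorm_Mmat_lt_half (p : R) s : (2 < n)%N -> 1 < p ->
  simplex_int s -> opnorm p%:E (Mmat s) < 1 / 2.
Proof.
move=> n3 p1 s_int; have p0 : 0 < p by lra.
pose C := \big[Num.max/0]_j schur_weight p (Mmat s) j.
have C_lt : C < (1 / 2) `^ p.
  apply: bigmax_lt => [|j _]; first by apply: powR_gt0; lra.
  exact: schur_weight_Mmat_lt.
apply: (@le_lt_trans _ _ (C `^ p^-1)).
  apply: opnorm_le; [exact: ltn_trans n3 | by rewrite lte_fin |].
  move=> v; apply: pnorm_mulmx_le; [exact: ltW | exact: bigmax_ge_id |].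
  by move=> j; exact: le_bigmax.
rewrite -[ltRHS](@powRK _ p) //.
by apply: ltr_powR2r; rewrite ?invr_gt0 ?bigmax_ge_id.
Qed.

Lemma Mmat_mulmx_const1 s : \sum_i s i 0 = 1 -> Mmat s *m const_mx 1 = 0 :> 'cV[R]_n.
Proof.
move=> s1; apply/matrixP => i j; rewrite !mxE.
under eq_bigr => k _ do rewrite MmatE mxE mulr1.
rewrite sumrB -mulr_sumr s1 mulr1 (bigD1 i) //= eqxx mulr1n big1 ?addr0 ?subrr //.
by move=> k ki; rewrite eq_sym (negbTE ki).
Qed.

Lemma Mmat_mulmx_delta s i k :
  s i 0 = s k 0 ->
  Mmat s *m (delta_mx i 0 - delta_mx k 0) = s i 0 *: (delta_mx i 0 - delta_mx k 0 : 'cV_n).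
Proof.
move=> sik; apply/matrixP => l j; have := MmatE s; move: (Mmat s) => M ME.
rewrite (ord1 j) mulmxBr -!colE !mxE !ME !andbT.
have [-> {l}|li] := eqVneq l i.
  by have [->|_] := eqVneq i k; rewrite /= -?sik; ring.
by have [->|_] := eqVneq l k; rewrite /= -?sik; ring.
Qed.

Lemma le_opnorm_Mmat (p : R) s i k : 1 <= p -> simplex_int s ->
  i != k -> s i 0 = s k 0 -> s i 0 <= opnorm p%:E (Mmat s).
Proof.
move=> p1 s_int ik sik; apply: (eigenvalue_le_opnorm _ _ _ _ (Mmat_mulmx_delta sik)).
- by lra.
- by case: s_int => /(_ i) /ltW.
- by move=> w; apply: pnorm_Mmat_le_half; rewrite ?lee_fin.
- apply/eqP => /matrixP/(_ i 0); rewrite !mxE !eqxx (negbTE ik) /=; lra.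
Qed.

Lemma le_opnorm1_Mmat s i : simplex_int s -> s i 0 = 1 / 2 ->
  1 / 2 <= opnorm 1%E (Mmat s).
Proof.
move=> s_int si; have <- : \sum_l `|Mmat s l i| = 1 / 2.
  by rewrite col_abs_sum_Mmat // si; field.
apply: (sum_norm_col_le_opnorm1 (K := 1 / 2)) => w.
by apply: pnorm_Mmat_le_half.
Qed.

(* Since [M(s)] kills the constant vector, the sign vector [2 e_i - 1] is mapped
   to [2 M(s) e_i], whose [i]-th entry is [2 s_i (1 - s_i)]. *)
Lemma le_opnormy_Mmat s i : simplex_int s -> s i 0 = 1 / 2 ->
  1 / 2 <= opnorm +oo%E (Mmat s).
Proof.
move=> s_int si; pose v : 'cV[R]_n := 2 *: delta_mx i 0 - const_mx 1.
have v0 : v != 0 by apply/eqP => /matrixP/(_ i 0); rewrite !mxE !eqxx /=; lra.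
have v_le1 : pnorm +oo%E v <= 1.
  apply: bigmax_le => // l _; rewrite !mxE andbT.
  case: (l == i) => /=; last by rewrite mulr0 sub0r normrN normr1.
  by rewrite mulr1 ger0_norm; lra.
have Mv_ge : 1 / 2 <= pnorm +oo%E (Mmat s *m v).
  apply: le_trans (le_bigmax _ _ i).
  rewrite mulmxBr Mmat_mulmx_const1 ?subr0; last by case: s_int.
  by rewrite -scalemxAr mxE -colE mxE MmatE eqxx si mulr1n ger0_norm; lra.
have v_gt0 : 0 < pnorm +oo%E v by exact: pnorm_gt0 lt0y v0.
have bounded w : pnorm +oo%E (Mmat s *m w) <= 1 / 2 * pnorm +oo%E w.
  exact: pnorm_Mmat_le_half s_int (leey _).
apply: le_trans (ler_opnorm lt0y bounded v0).
by rewrite ler_pdivlMr //; nra.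
Qed.

Lemma opnorm_Mmat_eq_half (p : \bar R) s i : p = 1%E \/ p = +oo%E ->
  simplex_int s -> s i 0 = 1 / 2 -> opnorm p (Mmat s) = 1 / 2.
Proof.
move=> p1y s_int si; have n0 : (0 < n)%N := leq_ltn_trans (leq0n i) (ltn_ord i).
have p1 : (1 <= p)%E by case: p1y => ->; rewrite ?leey.
apply/eqP; rewrite eq_le opnorm_Mmat_le_half //=.
by case: p1y => ->; [exact: le_opnorm1_Mmat si | exact: le_opnormy_Mmat si].
Qed.

End MmatNorms.

Lemma sup_eq_cvg (R : realType) (E : set R) (b : R) (u : nat -> R) :
  (forall y, E y -> y <= b) -> (forall k, E (u k)) -> u @ \oo --> b -> sup E = b.
Proof.
move=> Eb Eu ub; apply/eqP; rewrite eq_le ge_sup //=; last by exists (u 0).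
rewrite -(cvg_lim _ ub) //; apply: limr_le; first by apply/cvg_ex; exists b.
by apply: nearW => k; apply: ub_le_sup; [exists b | exact: Eu].
Qed.

Section Softmax.
Variables (R : realType) (n : nat).
Implicit Types (x : 'cV[R]_n) (s : 'cV[R]_n).

Lemma softmax_simplex_int x : (0 < n)%N -> simplex_int (softmax x).
Proof.
move=> n0; have D_gt0 : 0 < \sum_j expR (x j 0).
  by rewrite (bigD1 (Ordinal n0)) //= ltr_pwDl ?expR_gt0 // sumr_ge0 // => j _; rewrite expR_ge0.
split => [i|]; first by rewrite mxE divr_gt0 ?expR_gt0.
by under eq_bigr => i _ do rewrite mxE; rewrite -mulr_suml mulfV ?gt_eqF.
Qed.

Lemma softmax_ln s : simplex_int s -> softmax (\col_i ln (s i 0)) = s.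
Proof.
case=> s_gt0 s1; apply/matrixP => i j; rewrite (ord1 j) !mxE.
under eq_bigr => k _ do rewrite mxE lnK ?posrE //.
by rewrite s1 divr1 lnK ?posrE.
Qed.

Lemma sup_jac_simplex (p : \bar R) : (0 < n)%N -> sup_jac n p = sup_simplex n p.
Proof.
move=> n0; congr sup; apply/seteqP; split => y.
  by case=> x _ <-; exists (softmax x) => //; exact: softmax_simplex_int.
by case=> s s_int <-; exists (\col_i ln (s i 0)) => //; rewrite softmax_ln.
Qed.

Lemma sup_simplex_eq_half (p : \bar R) (u : nat -> 'cV[R]_n) : (0 < n)%N -> (1 <= p)%E ->
  (forall k, simplex_int (u k)) -> opnorm p (Mmat (u k)) @[k --> \oo] --> (1 / 2 : R) ->
  sup_simplex n p = 1 / 2.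
Proof.
move=> n0 p1 u_int u_half; apply: sup_eq_cvg u_half => [_ [s s_int <-]|k].
  exact: opnorm_Mmat_le_half.
by exists (u k) => //; exact: u_int.
Qed.

End Softmax.

Lemma softmax_x_star (R : realType) m (i : 'I_m.+2) :
  softmax (x_star m.+2 : 'cV[R]_m.+2) i 0 = if val i == 0%N then 1 / 2 else (m.+1%:R)^-1 / 2.
Proof.
rewrite !mxE big_ord_recl !mxE /=.
under eq_bigr => j _ do rewrite mxE /= expR0.
rewrite sumr_const card_ord /=.
by case: ifP => _; rewrite ?expR0 ?lnK ?posrE ?ltr0n // -mulr2n -mulr_natr; field.
Qed.

Section Twin.
Variables (R : realType) (m : nat).

Definition twin (a : R) : 'cV[R]_m.+3 :=
  \col_i (if (i < 2)%N then a else (1 - 2 * a) / m.+1%:R).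

Lemma twin_sum a : \sum_i twin a i 0 = 1.
Proof.
rewrite 2!big_ord_recl !mxE /=.
under eq_bigr => i _ do rewrite mxE /=.
rewrite sumr_const card_ord -[_ *+ m.+1]mulr_natr divfK ?pnatr_eq0 //; ring.
Qed.

Lemma twin_simplex_int a : 0 < a < 1 / 2 -> simplex_int (twin a).
Proof.
case/andP=> a_gt0 a_lt; split => [i|]; last exact: twin_sum.
by rewrite mxE; case: ifP => _ //; rewrite divr_gt0 ?ltr0n //; lra.
Qed.

Lemma twin_simplex_bd : simplex_bd (twin (1 / 2)).
Proof.
have zero : (1 - 2 * (1 / 2)) / m.+1%:R = 0 :> R by rewrite (_ : 1 - _ = 0) ?mul0r //; lra.
split; [|split; [exact: twin_sum|]].
  by move=> i; rewrite mxE; case: ifP => _; rewrite ?zero //; lra.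
by exists (@Ordinal m.+3 2 isT); rewrite mxE /= zero.
Qed.

Lemma twin_cvg (a_ : nat -> R) (a : R) :
  a_ @ \oo --> a -> twin (a_ k) @[k --> \oo] --> twin a.
Proof.
pose w : 'cV[R]_m.+3 := \col_i (if (i < 2)%N then 1 else - 2 / m.+1%:R).
have twinE b : twin b = twin 0 + b *: w.
  by apply/matrixP => i j; rewrite !mxE; case: ifP => _; ring.
move=> a_a; under eq_fun => k do rewrite twinE; rewrite twinE.
by apply: cvgD; [exact: cvg_cst | exact: cvgZl].
Qed.

Lemma le_opnorm_Mmat_twin (p a : R) : 1 <= p -> 0 < a < 1 / 2 ->
  a <= opnorm p%:E (Mmat (twin a)).
Proof.
move=> p1 a_itv; have := @le_opnorm_Mmat _ _ p (twin a) ord0 (@Ordinal m.+3 1 isT).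
by rewrite !mxE /=; apply => //; exact: twin_simplex_int.
Qed.

(* The witness is [twin a_k] with [a_k = 1/2 - 1/(4(k+1))], tending to the
   boundary point [(1/2, 1/2, 0, ..., 0)]. *)
Lemma softmax_seq_cvg_simplex_bd (p : R) : 1 <= p ->
  exists (x_ : nat -> 'cV[R]_m.+3) (s0 : 'cV[R]_m.+3),
    simplex_bd s0 /\ (forall k, simplex_int (softmax (x_ k))) /\
    (fun k => softmax (x_ k)) @ \oo --> s0 /\
    (fun k => opnorm p%:E (Mmat (softmax (x_ k)))) @ \oo --> (1 / 2 : R).
Proof.
move=> p1; pose a_ k : R := 1 / 2 - harmonic k / 4.
have a_itv k : 0 < a_ k < 1 / 2.
  have := @harmonic_gt0 R k; have : harmonic k <= 1 :> R.
    by rewrite /harmonic /= invf_le1 ?ler1n ?ltr0n.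
  by rewrite /a_; lra.
have a_half : a_ @ \oo --> (1 / 2 : R).
  rewrite -[X in _ --> X]subr0; apply: cvgB (cvg_cst _) _.
  by rewrite -(mul0r 4^-1); apply: cvgMl; exact: cvg_harmonic.
have softmax_twin k : softmax (\col_i ln (twin (a_ k) i 0)) = twin (a_ k).
  exact/softmax_ln/twin_simplex_int.
exists (fun k => \col_i ln (twin (a_ k) i 0)), (twin (1 / 2)).
split; first exact: twin_simplex_bd.
split; first by move=> k; rewrite softmax_twin; exact: twin_simplex_int.
split; under eq_fun => k do rewrite softmax_twin; first exact: twin_cvg.
apply: (@squeeze_cvgr _ _ _ _ a_ (fun=> 1 / 2)) => //; last exact: cvg_cst.
apply: nearW => k; rewrite le_opnorm_Mmat_twin //=.
by rewrite opnorm_Mmat_le_half ?lee_fin //; exact: twin_simplex_int.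
Qed.

End Twin.

Lemma opnorm_Mmat_softmax_x_star2 (R : realType) (p : R) : 1 <= p ->
  opnorm p%:E (Mmat (softmax (x_star 2 : 'cV[R]_2))) = 1 / 2.
Proof.
move=> p1; have s_int := softmax_simplex_int (x_star 2 : 'cV[R]_2) isT.
have [s0 s1] : softmax (x_star 2 : 'cV[R]_2) ord0 0 = 1 / 2 /\
               softmax (x_star 2 : 'cV[R]_2) ord_max 0 = 1 / 2.
  by rewrite !softmax_x_star /= invr1.
apply/eqP; rewrite eq_le opnorm_Mmat_le_half ?lee_fin //= -{1}s0.
by apply: (le_opnorm_Mmat p1 s_int (k := ord_max)); rewrite ?s0 ?s1.
Qed.

Lemma exists_simplex_seq_opnorm_half (R : realType) n (p : R) : (2 <= n)%N -> 1 <= p ->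
  exists2 u : nat -> 'cV[R]_n, (forall k, simplex_int (u k)) &
    opnorm p%:E (Mmat (u k)) @[k --> \oo] --> (1 / 2 : R).
Proof.
case: n => [|[|[|m]]] // _ p1.
  exists (fun=> softmax (x_star 2)); first by move=> _; exact: softmax_simplex_int.
  by rewrite opnorm_Mmat_softmax_x_star2 //; exact: cvg_cst.
have [x_ [_ [_ [x_int [_ x_half]]]]] := softmax_seq_cvg_simplex_bd m p1.
by exists (fun k => softmax (x_ k)).
Qed.

Theorem proposition2 (R : realType) (n : nat) (hn : (2 <= n)%N) :
  (* (a) p = 1 or p = oo *)
  (forall p : \bar R, (p = 1%E \/ p = +oo%E) ->
     sup_simplex n p = 1 / 2 /\ sup_jac n p = 1 / 2 /\
     (exists s : 'cV[R]_n, simplex_int s /\ opnorm p (Mmat s) = 1 / 2) /\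
     (simplex_int (softmax (x_star n : 'cV[R]_n)) /\
      opnorm p (Mmat (softmax (x_star n : 'cV[R]_n))) = 1 / 2))
  /\
  (* (b) 1 < p < oo *)
  (forall p : R, 1 < p ->
     sup_simplex n p%:E = 1 / 2 /\ sup_jac n p%:E = 1 / 2 /\
     ((2 < n)%N ->
        (forall s : 'cV[R]_n, simplex_int s -> opnorm p%:E (Mmat s) < 1 / 2) /\
        (exists (x_ : nat -> 'cV[R]_n) (s0 : 'cV[R]_n),
           simplex_bd s0 /\
           (forall k, simplex_int (softmax (x_ k))) /\
           (fun k => softmax (x_ k)) @ \oo --> s0 /\
           (fun k => opnorm p%:E (Mmat (softmax (x_ k)))) @ \oo --> (1 / 2 : R))) /\
     (n = 2%N ->
        exists s : 'cV[R]_n, simplex_int s /\ opnorm p%:E (Mmat s) = 1 / 2)).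
Proof.
case: n hn => [|[|m]] // _; have n0 : (0 < m.+2)%N by [].
pose s := softmax (x_star m.+2 : 'cV[R]_m.+2).
have s_int : simplex_int s := softmax_simplex_int _ n0.
split => [p p1y | p p1].
  have p_ge1 : (1 <= p)%E by case: p1y => ->; rewrite ?leey.
  have opn : opnorm p (Mmat s) = 1 / 2.
    by apply: (opnorm_Mmat_eq_half p1y s_int (i := ord0)); rewrite softmax_x_star.
  have sup_half : sup_simplex m.+2 p = 1 / 2.
    apply: (sup_simplex_eq_half (u := fun=> s) n0 p_ge1) => //.
    by rewrite opn; exact: cvg_cst.
  by rewrite sup_jac_simplex // sup_half; do !split => //; exists s.
have p_ge1 : 1 <= p by lra.
have [u u_int u_half] := exists_simplex_seq_opnorm_half (isT : (2 <= m.+2)%N) p_ge1.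
have sup_half : sup_simplex m.+2 p%:E = 1 / 2.
  by apply: (sup_simplex_eq_half n0 _ u_int u_half); rewrite lee_fin.
rewrite sup_jac_simplex // sup_half; split => //; split => //; split.
- case: m {s s_int u u_int u_half sup_half n0} => // m n3.
  split => [s|]; last exact: softmax_seq_cvg_simplex_bd.
  exact: opnorm_Mmat_lt_half.
- by case=> m0; subst m; exists s; rewrite opnorm_Mmat_softmax_x_star2.
Qed.
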